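(* Let $(\varphi_k)_{k\ge0}$ be a sequence of nonnegative weights with $\varphi_0>0$ and $\varphi(t)=\sum_k\varphi_kt^k$. For every $n\ge1$ there is a bijection between the set of (ordered) increasing diamonds of size $n$ on the label set $\{1,\dots,n\}$ with degree-weights $(\varphi_k)$ and the set of ordered increasing bucket trees of size $n$ with maximal bucket size $b=2$, degree-weights $(\varphi_k)$ and $\psi_1=1$; this bijection preserves weights. In particular both families have the same total weight for each size $n$.
   Context: Increasing diamonds are defined recursively on a finite set $L$ of integer labels. If $|L|=1$, the unique increasing diamond on $L$ is a single vertex carrying that label; its weight is $1$. If $|L|\ge2$, an increasing diamond on $L$ consists of a source vertex labelled $\min L$, a sink vertex labelled $\max L$, and an ordered sequence $(F_1,\dots,F_r)$, $r\ge0$, of increasing diamonds whose label sets partition $L\setminus\{\min L,\max L\}$ (as a directed graph: the source points to the minimal vertex of each $F_i$ and the maximal vertex of each $F_i$ points to the sink); its weight is $\varphi_r\prod_{i=1}^r w(F_i)$. The size is $|L|$. (Symbolically $\mathcal F=\mathcal Z^{\Box}+\mathcal Z^{\Box}\ast\varphi(\mathcal F)\ast\mathcal Z^{\blacksquare}$.) Ordered increasing bucket trees with $b=2$: rooted plane trees (children ordered) whose nodes have capacity $1$ or $2$, every node with a child having capacity $2$; a tree of size $n$ (sum of capacities) carries labels $1,\dots,n$, each node holding as many labels as its capacity, with every label in a node smaller than all labels in its children. Weight: product over nodes of $\varphi_{d^+(v)}$ for capacity-2 nodes ($d^+(v)$ = number of children) and $\psi_1=1$ for capacity-1 nodes. 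*)

From Stdlib Require Import Reals List Permutation Arith.
Import ListNotations.
Open Scope R_scope.

(** * Increasing diamonds
    [DV l]          : a single vertex labelled l (label set of size 1);
    [DN lo hi fs]   : source labelled lo, sink labelled hi, and the ordered
                      sequence fs = (F_1,...,F_r) of sub-diamonds. *)
Inductive diamond : Type :=
| DV : nat -> diamond
| DN : nat -> nat -> list diamond -> diamond.

Fixpoint dlabels (d : diamond) : list nat :=
  match d with
  | DV l => [l]
  | DN lo hi fs => lo :: hi :: flat_map dlabels fs
  end.

Inductive valid_diamond : diamond -> Prop :=
| vd_V l : valid_diamond (DV l)
| vd_N lo hi fs :
    (lo < hi)%nat ->
    (forall f, In f fs ->
       valid_diamond f /\ forall x, In x (dlabels f) -> (lo < x < hi)%nat) ->
    NoDup (flat_map dlabels fs) ->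
    valid_diamond (DN lo hi fs).

Definition is_diamond_n (n : nat) (d : diamond) : Prop :=
  valid_diamond d /\ Permutation (dlabels d) (seq 1 n).

Fixpoint wdiamond (phi : nat -> R) (d : diamond) : R :=
  match d with
  | DV _ => 1
  | DN _ _ fs => phi (length fs) * fold_right (fun f acc => wdiamond phi f * acc) 1 fs
  end.

(** * Ordered increasing bucket trees with b = 2
    [B1 a]        : node of capacity 1 holding label a (a leaf: nodes with
                    children have capacity 2);
    [B2 a b ts]   : node of capacity 2 holding labels a < b, with ordered
                    list of children ts. *)
Inductive btree : Type :=
| B1 : nat -> btree
| B2 : nat -> nat -> list btree -> btree.

Definition root_labels (t : btree) : list nat :=
  match t with
  | B1 a => [a]
  | B2 a b _ => [a; b]
  end.

Fixpoint blabels (t : btree) : list nat :=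
  match t with
  | B1 a => [a]
  | B2 a b ts => a :: b :: flat_map blabels ts
  end.

Inductive valid_btree : btree -> Prop :=
| vb_1 a : valid_btree (B1 a)
| vb_2 a b ts :
    (a < b)%nat ->
    (forall t, In t ts ->
       valid_btree t /\ forall x, In x (root_labels t) -> (b < x)%nat) ->
    valid_btree (B2 a b ts).

Definition is_btree_n (n : nat) (t : btree) : Prop :=
  valid_btree t /\ Permutation (blabels t) (seq 1 n).

Fixpoint wbtree (phi : nat -> R) (t : btree) : R :=
  match t with
  | B1 _ => 1
  | B2 _ _ ts => phi (length ts) * fold_right (fun u acc => wbtree phi u * acc) 1 ts
  end.

Definition sumR (l : list R) : R := fold_right Rplus 0 l.

(* A diamond with source lo, sink hi and sub-diamonds F_1, ..., F_r becomes the bucket tree whose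
   root holds lo and s, the least label of the F_i (or hi if r = 0).  When r > 0, s is the source of
   exactly one F_i; the labels of that F_i are moved one step up along its own label set, the
   largest one to hi, so that this child trades s for hi.  Conversely, a root (a, b) becomes source a and sink H, the largest label of its
   subtrees, and the child containing H has its labels moved one step down, the smallest one to b.
   Both maps preserve the number of children of every internal node, hence the weight, and the
   total weights agree because diamonds on {1, ..., n} are finitely many. *)

From Stdlib Require Import Reals List Permutation Lia Wf_nat ClassicalEpsilon.
(* Imported after Reals, which has its own [B1]. *)
Import ListNotations.
Open Scope nat_scope.

Definition succ_in (K : list nat) (H x : nat) : nat :=
  fold_right (fun y acc => if x <? y then Nat.min y acc else acc) H K.

Definition pred_in (K : list nat) (b x : nat) : nat :=
  fold_right (fun y acc => if y <? x then Nat.max y acc else acc) b K.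

Lemma succ_in_le K H x : succ_in K H x <= H.
Proof. induction K as [|y K IH]; simpl; [|destruct (x <? y)]; lia. Qed.

Lemma succ_in_least K H x y : In y K -> x < y -> succ_in K H x <= y.
Proof.
  induction K as [|z K IH]; simpl; [tauto|].
  intros [<-|Hy] Hxy; destruct (Nat.ltb_spec x z); try lia; auto.
  specialize (IH Hy Hxy); lia.
Qed.

Lemma succ_in_cases K H x :
  succ_in K H x = H \/ (In (succ_in K H x) K /\ x < succ_in K H x).
Proof.
  induction K as [|y K IH]; simpl; auto.
  destruct (Nat.ltb_spec x y); [|tauto].
  destruct (Nat.min_spec y (succ_in K H x)) as [[_ ->]|[_ ->]]; tauto.
Qed.

Lemma succ_in_gt K H x : x < H -> x < succ_in K H x.
Proof. intros. destruct (succ_in_cases K H x) as [->|[_ ?]]; auto. Qed.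

Lemma succ_in_mem K H x : In (succ_in K H x) (H :: K).
Proof. destruct (succ_in_cases K H x) as [->|[? _]]; simpl; auto. Qed.

Lemma pred_in_ge K b x : b <= pred_in K b x.
Proof. induction K as [|y K IH]; simpl; [|destruct (y <? x)]; lia. Qed.

Lemma pred_in_greatest K b x y : In y K -> y < x -> y <= pred_in K b x.
Proof.
  induction K as [|z K IH]; simpl; [tauto|].
  intros [<-|Hy] Hyx; destruct (Nat.ltb_spec z x); try lia; auto.
  specialize (IH Hy Hyx); lia.
Qed.

Lemma pred_in_cases K b x :
  pred_in K b x = b \/ (In (pred_in K b x) K /\ pred_in K b x < x).
Proof.
  induction K as [|y K IH]; simpl; auto.
  destruct (Nat.ltb_spec y x); [|tauto].
  destruct (Nat.max_spec y (pred_in K b x)) as [[_ ->]|[_ ->]]; tauto.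
Qed.

Lemma pred_in_lt K b x : b < x -> pred_in K b x < x.
Proof. intros. destruct (pred_in_cases K b x) as [->|[_ ?]]; auto. Qed.

Lemma pred_in_mem K b x : In (pred_in K b x) (b :: K).
Proof. destruct (pred_in_cases K b x) as [->|[? _]]; simpl; auto. Qed.

Lemma pred_in_succ_in K K' b H x :
  incl K' (H :: K) -> In x (b :: K') -> b <= x < H -> pred_in K' b (succ_in K H x) = x.
Proof.
  intros HK' Hx Hbx.
  pose proof (succ_in_gt K H x (proj2 Hbx)) as Hxy.
  pose proof (succ_in_le K H x) as HyH.
  set (y := succ_in K H x) in *.
  assert (x <= pred_in K' b y).
  { destruct Hx as [<-|Hx]; [apply pred_in_ge|apply pred_in_greatest; auto]. }
  destruct (pred_in_cases K' b y) as [E|[Hp Hpy]]; [rewrite E in *; lia|].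
  destruct (HK' _ Hp) as [Hp'|Hp']; [lia|].
  destruct (Nat.le_gt_cases (pred_in K' b y) x) as [?|Hgt]; [lia|].
  pose proof (succ_in_least K H x _ Hp' Hgt); lia.
Qed.

Lemma succ_in_pred_in K K' b H x :
  incl K' (b :: K) -> In x (H :: K') -> b < x <= H -> succ_in K' H (pred_in K b x) = x.
Proof.
  intros HK' Hx Hbx.
  pose proof (pred_in_lt K b x (proj1 Hbx)) as Hpx.
  pose proof (pred_in_ge K b x) as Hbp.
  set (p := pred_in K b x) in *.
  assert (succ_in K' H p <= x).
  { destruct Hx as [<-|Hx]; [apply succ_in_le|apply succ_in_least; auto]. }
  destruct (succ_in_cases K' H p) as [E|[Hs Hps]]; [rewrite E in *; lia|].
  destruct (HK' _ Hs) as [Hs'|Hs']; [lia|].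
  destruct (Nat.le_gt_cases x (succ_in K' H p)) as [?|Hlt]; [lia|].
  pose proof (pred_in_greatest K b x _ Hs' Hlt); lia.
Qed.

Lemma NoDup_map_increasing (g : nat -> nat) K :
  NoDup K -> (forall x y, In x K -> In y K -> x < y -> g x < g y) -> NoDup (map g K).
Proof.
  intros HK Hg. apply NoDup_map_NoDup_ForallPairs; auto.
  intros x y Hx Hy Hxy. destruct (Nat.lt_total x y) as [h|[h|h]]; auto.
  - specialize (Hg _ _ Hx Hy h); lia.
  - specialize (Hg _ _ Hy Hx h); lia.
Qed.

Lemma succ_in_increasing K H x y : In y K -> x < y < H -> succ_in K H x < succ_in K H y.
Proof.
  intros Hy Hxy. pose proof (succ_in_least K H x y Hy (proj1 Hxy)).
  pose proof (succ_in_gt K H y (proj2 Hxy)). lia.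
Qed.

Lemma pred_in_increasing K b x y : In x K -> b < x < y -> pred_in K b x < pred_in K b y.
Proof.
  intros Hx Hxy. pose proof (pred_in_greatest K b y x Hx (proj2 Hxy)).
  pose proof (pred_in_lt K b x (proj1 Hxy)). lia.
Qed.

Section ShiftUp.
Variables (K : list nat) (s H : nat).
Hypotheses (HK : NoDup K) (Hs : In s K) (Hrange : forall y, In y K -> s <= y < H).

Lemma succ_in_perm : Permutation (s :: map (succ_in K H) K) (H :: K).
Proof.
  apply NoDup_Permutation.
  - constructor.
    2:{ apply NoDup_map_increasing; auto. intros x y _ Hy Hxy.
        apply succ_in_increasing; auto. pose proof (Hrange y Hy); lia. }
    rewrite in_map_iff. intros [x [Hxs Hx]].
    pose proof (succ_in_gt K H x (proj2 (Hrange x Hx))). pose proof (Hrange x Hx). lia.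
  - constructor; auto. intros HH. pose proof (Hrange H HH). lia.
  - intros y. split.
    + intros [<-|Hy]; [right; auto|].
      apply in_map_iff in Hy as [x [<- _]]. apply succ_in_mem.
    + intros Hy. destruct (Nat.eq_dec y s) as [->|Hys]; [left; auto|right].
      assert (Hsy : s < y <= H).
      { destruct Hy as [<-|Hy]; [|pose proof (Hrange y Hy)]; pose proof (Hrange s Hs); lia. }
      rewrite <- (succ_in_pred_in K K s H y); auto using incl_tl, incl_refl.
      apply in_map. destruct (pred_in_cases K s y) as [->|[]]; auto.
Qed.

Lemma pred_in_succ_in_perm x :
  In x K -> pred_in (map (succ_in K H) K) s (succ_in K H x) = x.
Proof.
  intros Hx. apply pred_in_succ_in.
  - intros y Hy. apply in_map_iff in Hy as [z [<- _]]. apply succ_in_mem.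
  - apply (Permutation_in _ (Permutation_sym succ_in_perm)). right; auto.
  - pose proof (Hrange x Hx); lia.
Qed.
End ShiftUp.

Section ShiftDown.
Variables (K : list nat) (b H : nat).
Hypotheses (HK : NoDup K) (HH : In H K) (Hrange : forall y, In y K -> b < y <= H).

Lemma pred_in_perm : Permutation (H :: map (pred_in K b) K) (b :: K).
Proof.
  apply NoDup_Permutation.
  - constructor.
    2:{ apply NoDup_map_increasing; auto. intros x y Hx _ Hxy.
        apply pred_in_increasing; auto. pose proof (Hrange x Hx); lia. }
    rewrite in_map_iff. intros [x [Hxs Hx]].
    pose proof (pred_in_lt K b x (proj1 (Hrange x Hx))). pose proof (Hrange x Hx). lia.
  - constructor; auto. intros Hb. pose proof (Hrange b Hb). lia.
  - intros y. split.
    + intros [<-|Hy]; [right; auto|].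
      apply in_map_iff in Hy as [x [<- _]]. apply pred_in_mem.
    + intros Hy. destruct (Nat.eq_dec y H) as [->|HyH]; [left; auto|right].
      assert (Hby : b <= y < H).
      { destruct Hy as [<-|Hy]; [|pose proof (Hrange y Hy)]; pose proof (Hrange H HH); lia. }
      rewrite <- (pred_in_succ_in K K b H y); auto using incl_tl, incl_refl.
      apply in_map. destruct (succ_in_cases K H y) as [->|[]]; auto.
Qed.

Lemma succ_in_pred_in_perm x :
  In x K -> succ_in (map (pred_in K b) K) H (pred_in K b x) = x.
Proof.
  intros Hx. apply succ_in_pred_in.
  - intros y Hy. apply in_map_iff in Hy as [z [<- _]]. apply pred_in_mem.
  - apply (Permutation_in _ (Permutation_sym pred_in_perm)). right; auto.
  - pose proof (Hrange x Hx); lia.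
Qed.
End ShiftDown.

Lemma succ_in_eq K H x m :
  In m (H :: K) -> x < m <= H -> (forall y, In y K -> x < y -> m <= y) -> succ_in K H x = m.
Proof.
  intros Hm Hxm Hleast.
  assert (succ_in K H x <= m).
  { destruct Hm as [<-|Hm]; [apply succ_in_le|apply succ_in_least; auto; lia]. }
  destruct (succ_in_cases K H x) as [E|[Hs Hxs]]; [rewrite E in *; lia|].
  specialize (Hleast _ Hs Hxs); lia.
Qed.

Lemma fold_right_max_ge d l y : In y (d :: l) -> y <= fold_right Nat.max d l.
Proof.
  induction l as [|z l IH]; simpl; intros Hy; [destruct Hy as [<-|[]]; lia|].
  destruct Hy as [<-|[<-|Hy]];
    [specialize (IH (or_introl eq_refl))|lia|specialize (IH (or_intror Hy))]; lia.
Qed.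

Lemma fold_right_max_mem d l : In (fold_right Nat.max d l) (d :: l).
Proof.
  induction l as [|z l IH]; simpl; auto.
  destruct (Nat.max_spec z (fold_right Nat.max d l)) as [[_ ->]|[_ ->]]; simpl in *; tauto.
Qed.

Lemma fold_right_max_eq d l m :
  In m (d :: l) -> (forall y, In y (d :: l) -> y <= m) -> fold_right Nat.max d l = m.
Proof.
  intros Hm Hle. pose proof (Hle _ (fold_right_max_mem d l)).
  pose proof (fold_right_max_ge d l m Hm). lia.
Qed.

Lemma perm_flat_map_map {X Y} (lx : X -> list nat) (ly : Y -> list nat) (F : X -> Y) xs :
  (forall x, In x xs -> Permutation (ly (F x)) (lx x)) ->
  Permutation (flat_map ly (map F xs)) (flat_map lx xs).
Proof.
  induction xs as [|x xs IH]; simpl; intros Hp; auto.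
  apply Permutation_app; auto.
Qed.

Lemma NoDup_app_not_in {A} (l1 l2 : list A) x : NoDup (l1 ++ l2) -> In x l1 -> ~ In x l2.
Proof.
  intros HN Hx Hx2. apply in_split in Hx as (l & l' & ->).
  rewrite <- app_assoc in HN. apply (NoDup_remove_2 _ _ _ HN).
  apply in_or_app; right; apply in_or_app; right; exact Hx2.
Qed.

Lemma perm_flat_map_map_marked {X Y} (lx : X -> list nat) (ly : Y -> list nat) (F : X -> Y)
    xs s e :
  NoDup (flat_map lx xs) -> In s (flat_map lx xs) ->
  (forall x, In x xs -> ~ In s (lx x) -> Permutation (ly (F x)) (lx x)) ->
  (forall x, In x xs -> In s (lx x) -> Permutation (s :: ly (F x)) (e :: lx x)) ->
  Permutation (s :: flat_map ly (map F xs)) (e :: flat_map lx xs).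
Proof.
  induction xs as [|x xs IH]; simpl; [tauto|]. intros HN Hs Hout Hin.
  destruct (in_dec Nat.eq_dec s (lx x)) as [Hsx|Hsx].
  - rewrite !app_comm_cons. apply Permutation_app; auto.
    apply perm_flat_map_map. intros y Hy. apply Hout; auto. intros Hsy.
    apply (NoDup_app_not_in _ _ s HN Hsx). apply in_flat_map; eauto.
  - apply in_app_or in Hs as [Hs|Hs]; [tauto|].
    rewrite (Permutation_middle (ly (F x))), (Permutation_middle (lx x)).
    apply Permutation_app; auto. apply IH; auto. eapply NoDup_app_remove_l; eauto.
Qed.

Lemma fold_right_mult_map {X Y} (wx : X -> R) (wy : Y -> R) (F : X -> Y) xs :
  (forall x, In x xs -> wy (F x) = wx x) ->
  fold_right (fun y acc => (wy y * acc)%R) 1%R (map F xs)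
  = fold_right (fun x acc => (wx x * acc)%R) 1%R xs.
Proof. induction xs as [|x xs IH]; simpl; intros Hw; auto. rewrite Hw, IH; auto. Qed.

Lemma diamond_nested_ind (P : diamond -> Prop) :
  (forall l, P (DV l)) ->
  (forall lo hi fs, (forall f, In f fs -> P f) -> P (DN lo hi fs)) ->
  forall d, P d.
Proof.
  intros HV HN. fix IH 1. intros [l|lo hi fs]; [apply HV|apply HN].
  induction fs as [|f fs IHfs]; intros f' Hf; [destruct Hf|].
  destruct Hf as [<-|Hf]; [apply IH|apply IHfs, Hf].
Qed.

Fixpoint dmap (g : nat -> nat) (d : diamond) : diamond :=
  match d with
  | DV l => DV (g l)
  | DN lo hi fs => DN (g lo) (g hi) (map (dmap g) fs)
  end.

Lemma flat_map_dlabels_dmap g fs :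
  (forall f, In f fs -> dlabels (dmap g f) = map g (dlabels f)) ->
  flat_map dlabels (map (dmap g) fs) = map g (flat_map dlabels fs).
Proof.
  intros Hfs. rewrite !flat_map_concat_map, concat_map, !map_map.
  f_equal. apply map_ext_in. auto.
Qed.

Lemma dlabels_dmap g d : dlabels (dmap g d) = map g (dlabels d).
Proof.
  induction d as [l|lo hi fs IH] using diamond_nested_ind; simpl; auto.
  rewrite flat_map_dlabels_dmap; auto.
Qed.

Lemma dmap_dmap_id g h d :
  (forall x, In x (dlabels d) -> g (h x) = x) -> dmap g (dmap h d) = d.
Proof.
  induction d as [l|lo hi fs IH] using diamond_nested_ind; simpl; intros Hgh.
  - rewrite Hgh; auto.
  - rewrite !Hgh by auto. f_equal. rewrite map_map.
    erewrite map_ext_in; [apply map_id|]. intros f Hf. apply IH; auto.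
    intros x Hx. apply Hgh. right; right. apply in_flat_map; eauto.
Qed.

Lemma wdiamond_dmap phi g d : wdiamond phi (dmap g d) = wdiamond phi d.
Proof.
  induction d as [l|lo hi fs IH] using diamond_nested_ind; simpl; auto.
  rewrite length_map. f_equal. apply fold_right_mult_map. auto.
Qed.

Lemma valid_DN_inv lo hi fs : valid_diamond (DN lo hi fs) ->
  lo < hi /\ (forall f, In f fs -> valid_diamond f) /\
  (forall y, In y (flat_map dlabels fs) -> lo < y < hi) /\ NoDup (flat_map dlabels fs).
Proof.
  intros Hv. inversion Hv as [|? ? ? Hlh Hfs HN]; subst.
  split; [|split; [|split]]; auto.
  - intros f Hf. apply Hfs; auto.
  - intros y Hy. apply in_flat_map in Hy as [f [Hf Hy]]. apply (Hfs f Hf); auto.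
Qed.

Lemma valid_diamond_NoDup d : valid_diamond d -> NoDup (dlabels d).
Proof.
  destruct d as [l|lo hi fs]; simpl; intros Hv; [repeat constructor; auto|].
  destruct (valid_DN_inv _ _ _ Hv) as (Hlh & Hfs & Hrange & HN).
  constructor; [|constructor]; auto.
  - intros [Hhi|Hlo]; [lia|]. specialize (Hrange _ Hlo); lia.
  - intros Hhi. specialize (Hrange _ Hhi); lia.
Qed.

Lemma valid_dmap g d : valid_diamond d ->
  (forall x y, In x (dlabels d) -> In y (dlabels d) -> x < y -> g x < g y) ->
  valid_diamond (dmap g d).
Proof.
  induction d as [l|lo hi fs IH] using diamond_nested_ind; simpl; intros Hv Hg; [constructor|].
  destruct (valid_DN_inv _ _ _ Hv) as (Hlh & Hfs & Hrange & HN).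
  assert (Hgf : forall f x y, In f fs -> In x (dlabels f) -> In y (dlabels f) ->
                             x < y -> g x < g y).
  { intros f x y Hf Hx Hy. apply Hg; right; right; apply in_flat_map; eauto. }
  constructor.
  - apply Hg; auto.
  - intros f' Hf'. apply in_map_iff in Hf' as [f [<- Hf]]. split; [apply IH; eauto|].
    intros x Hx. rewrite dlabels_dmap in Hx. apply in_map_iff in Hx as [z [<- Hz]].
    assert (Hzr : lo < z < hi) by (apply Hrange, in_flat_map; eauto).
    assert (Hz' : In z (dlabels (DN lo hi fs))) by (right; right; apply in_flat_map; eauto).
    split; apply Hg; simpl; auto; lia.
  - rewrite flat_map_dlabels_dmap; [|intros; apply dlabels_dmap].
    apply NoDup_map_increasing; auto.
Qed.

Definition shift_up (H : nat) (d : diamond) : diamond := dmap (succ_in (dlabels d) H) d.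

Definition shift_down (b : nat) (d : diamond) : diamond := dmap (pred_in (dlabels d) b) d.

Lemma valid_shift_up H d :
  valid_diamond d -> (forall y, In y (dlabels d) -> y < H) -> valid_diamond (shift_up H d).
Proof.
  intros Hv HH. apply valid_dmap; auto. intros x y _ Hy Hxy.
  apply succ_in_increasing; auto.
Qed.

Lemma valid_shift_down b d :
  valid_diamond d -> (forall y, In y (dlabels d) -> b < y) -> valid_diamond (shift_down b d).
Proof.
  intros Hv Hb. apply valid_dmap; auto. intros x y Hx _ Hxy.
  apply pred_in_increasing; auto.
Qed.

Section ShiftDiamond.
Variables (d : diamond) (b H : nat).
Hypothesis HN : NoDup (dlabels d).

Lemma shift_up_perm : In b (dlabels d) -> (forall y, In y (dlabels d) -> b <= y < H) ->
  Permutation (b :: dlabels (shift_up H d)) (H :: dlabels d).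
Proof.
  intros. unfold shift_up. rewrite dlabels_dmap.
  apply succ_in_perm; auto.
Qed.

Lemma shift_down_shift_up : In b (dlabels d) -> (forall y, In y (dlabels d) -> b <= y < H) ->
  shift_down b (shift_up H d) = d.
Proof.
  intros. unfold shift_down, shift_up. rewrite dlabels_dmap.
  apply dmap_dmap_id. intros x Hx. apply pred_in_succ_in_perm; auto.
Qed.

Lemma shift_down_perm : In H (dlabels d) -> (forall y, In y (dlabels d) -> b < y <= H) ->
  Permutation (H :: dlabels (shift_down b d)) (b :: dlabels d).
Proof.
  intros. unfold shift_down. rewrite dlabels_dmap.
  apply pred_in_perm; auto.
Qed.

Lemma shift_up_shift_down : In H (dlabels d) -> (forall y, In y (dlabels d) -> b < y <= H) ->
  shift_up H (shift_down b d) = d.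
Proof.
  intros. unfold shift_down, shift_up. rewrite dlabels_dmap.
  apply dmap_dmap_id. intros x Hx. apply succ_in_pred_in_perm; auto.
Qed.
End ShiftDiamond.

Definition dsize (d : diamond) : nat := length (dlabels d).

Lemma dsize_child lo hi fs f : In f fs -> dsize f < dsize (DN lo hi fs).
Proof.
  intros Hf. unfold dsize. simpl. rewrite length_flat_map.
  apply in_split in Hf as (l & l' & ->). rewrite map_app, list_sum_app. simpl. lia.
Qed.

Lemma dsize_shift_up_child lo hi fs f H : In f fs -> dsize (shift_up H f) < dsize (DN lo hi fs).
Proof.
  intros Hf. unfold dsize at 1, shift_up. rewrite dlabels_dmap, length_map. apply dsize_child, Hf.
Qed.

Lemma btree_nested_ind (P : btree -> Prop) :
  (forall a, P (B1 a)) ->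
  (forall a b ts, (forall t, In t ts -> P t) -> P (B2 a b ts)) ->
  forall t, P t.
Proof.
  intros H1 H2. fix IH 1. intros [a|a b ts]; [apply H1|apply H2].
  induction ts as [|t ts IHts]; intros t' Ht; [destruct Ht|].
  destruct Ht as [<-|Ht]; [apply IH|apply IHts, Ht].
Qed.

Lemma valid_btree_labels_gt c t :
  valid_btree t -> (forall x, In x (root_labels t) -> c < x) ->
  forall y, In y (blabels t) -> c < y.
Proof.
  revert c. induction t as [a|a b ts IH] using btree_nested_ind; simpl; intros c Hv Hc y Hy.
  - destruct Hy as [<-|[]]. auto.
  - inversion Hv as [|? ? ? Hab Hts]; subst.
    destruct Hy as [<-|[<-|Hy]]; auto.
    apply in_flat_map in Hy as [u [Hu Hy]]. destruct (Hts u Hu) as [Hvu Hru].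
    specialize (IH u Hu b Hvu Hru y Hy). specialize (Hc b (or_intror (or_introl eq_refl))). lia.
Qed.

Lemma valid_B2_inv a b ts : valid_btree (B2 a b ts) -> NoDup (blabels (B2 a b ts)) ->
  a < b /\ (forall u, In u ts -> valid_btree u /\ NoDup (blabels u)) /\
  (forall y, In y (flat_map blabels ts) -> b < y) /\ NoDup (flat_map blabels ts).
Proof.
  intros Hv HN. inversion Hv as [|? ? ? Hab Hts]; subst.
  simpl in HN. apply NoDup_cons_iff in HN as [_ HN]. apply NoDup_cons_iff in HN as [_ HN].
  split; [|split; [|split]]; auto.
  - intros u Hu. split; [apply Hts; auto|].
    apply in_split in Hu as (l & l' & ->). rewrite flat_map_app in HN. simpl in HN.
    apply NoDup_app_remove_r with (flat_map blabels l'). apply (NoDup_app_remove_l _ _ HN).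
  - intros y Hy. apply in_flat_map in Hy as [u [Hu Hy]].
    destruct (Hts u Hu) as [Hvu Hru]. apply (valid_btree_labels_gt b u Hvu Hru y Hy).
Qed.

(* [to_btree g d] is the bucket tree of [dmap g d] (lemma [to_btree_dmap]); accumulating the
   relabelling [g] keeps the recursion structural although children get relabelled. *)
Fixpoint to_btree (g : nat -> nat) (d : diamond) : btree :=
  match d with
  | DV l => B1 (g l)
  | DN lo hi fs =>
      let s := succ_in (map g (flat_map dlabels fs)) (g hi) (g lo) in
      B2 (g lo) s
        (map (fun f => let K := map g (dlabels f) in
                       if in_dec Nat.eq_dec s K then to_btree (fun x => succ_in K (g hi) (g x)) f
                       else to_btree g f) fs)
  end.

Definition btree_of_diamond : diamond -> btree := to_btree (fun x => x).

Fixpoint diamond_of_btree (t : btree) : diamond :=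
  match t with
  | B1 a => DV a
  | B2 a b ts =>
      let H := fold_right Nat.max b (flat_map blabels ts) in
      DN a H (map (fun u => if in_dec Nat.eq_dec H (blabels u)
                            then shift_down b (diamond_of_btree u) else diamond_of_btree u) ts)
  end.

Lemma to_btree_dmap g h d : to_btree g (dmap h d) = to_btree (fun x => g (h x)) d.
Proof.
  revert g. induction d as [l|lo hi fs IH] using diamond_nested_ind; intros g; simpl; auto.
  rewrite flat_map_dlabels_dmap by (intros; apply dlabels_dmap).
  rewrite !map_map. f_equal. apply map_ext_in. intros f Hf.
  rewrite dlabels_dmap, map_map. destruct in_dec; rewrite IH; auto.
Qed.

Lemma btree_of_diamond_DN lo hi fs :
  btree_of_diamond (DN lo hi fs) =
  let s := succ_in (flat_map dlabels fs) hi lo in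
  B2 lo s (map (fun f => if in_dec Nat.eq_dec s (dlabels f)
                         then btree_of_diamond (shift_up hi f) else btree_of_diamond f) fs).
Proof.
  unfold btree_of_diamond, shift_up. simpl. rewrite map_id. f_equal.
  apply map_ext_in. intros f _. rewrite map_id.
  destruct in_dec; [rewrite to_btree_dmap|]; reflexivity.
Qed.

Lemma diamond_of_btree_B2 a b ts :
  diamond_of_btree (B2 a b ts) =
  let H := fold_right Nat.max b (flat_map blabels ts) in
  DN a H (map (fun u => if in_dec Nat.eq_dec H (blabels u)
                        then shift_down b (diamond_of_btree u) else diamond_of_btree u) ts).
Proof. reflexivity. Qed.

Lemma DN_child_label_range lo hi fs f y :
  valid_diamond (DN lo hi fs) -> In f fs -> In y (dlabels f) ->
  succ_in (flat_map dlabels fs) hi lo <= y < hi.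
Proof.
  intros Hv Hf Hy. destruct (valid_DN_inv _ _ _ Hv) as (_ & _ & Hrange & _).
  assert (HyL : In y (flat_map dlabels fs)) by (apply in_flat_map; eauto).
  pose proof (Hrange y HyL). pose proof (succ_in_least _ hi lo y HyL). lia.
Qed.

Lemma btree_of_diamond_perm d :
  valid_diamond d -> Permutation (blabels (btree_of_diamond d)) (dlabels d).
Proof.
  induction d as [d IH] using (induction_ltof1 _ dsize). intros Hv.
  destruct d as [l|lo hi fs]; [reflexivity|].
  destruct (valid_DN_inv _ _ _ Hv) as (_ & Hfs & _ & HN).
  pose proof (fun f y => DN_child_label_range lo hi fs f y Hv) as Hchild.
  rewrite btree_of_diamond_DN. cbv zeta. simpl blabels. apply perm_skip.
  set (s := succ_in (flat_map dlabels fs) hi lo) in *.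
  assert (Hnormal : forall f, In f fs -> Permutation (blabels (btree_of_diamond f)) (dlabels f)).
  { intros f Hf. apply IH; auto. apply dsize_child; auto. }
  destruct (succ_in_cases (flat_map dlabels fs) hi lo) as [Hs|[Hs _]]; fold s in Hs.
  - rewrite Hs at 1. apply perm_skip, perm_flat_map_map. intros f Hf.
    destruct in_dec as [Hin|Hnin]; [|auto].
    specialize (Hchild f s Hf Hin). lia.
  - apply perm_flat_map_map_marked; auto; intros f Hf Hin;
      destruct in_dec; try contradiction; auto.
    assert (Hrf : forall y, In y (dlabels f) -> s <= y < hi) by (intros y; apply Hchild; auto).
    eapply perm_trans; [apply perm_skip, IH|apply shift_up_perm]; auto using valid_diamond_NoDup.
    + apply dsize_shift_up_child; auto.
    + apply valid_shift_up; auto. intros y Hy. apply Hrf; auto.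
Qed.

Lemma root_labels_incl t : incl (root_labels t) (blabels t).
Proof. destruct t; simpl; intros x Hx; simpl in *; tauto. Qed.

Lemma btree_of_diamond_valid d : valid_diamond d -> valid_btree (btree_of_diamond d).
Proof.
  induction d as [d IH] using (induction_ltof1 _ dsize). intros Hv.
  destruct d as [l|lo hi fs]; [constructor|].
  destruct (valid_DN_inv _ _ _ Hv) as (Hlh & Hfs & _ & _).
  pose proof (fun f y => DN_child_label_range lo hi fs f y Hv) as Hchild.
  rewrite btree_of_diamond_DN. cbv zeta.
  set (s := succ_in (flat_map dlabels fs) hi lo) in *.
  constructor; [apply succ_in_gt; auto|].
  intros t Ht. apply in_map_iff in Ht as [f [<- Hf]].
  destruct in_dec as [Hin|Hnin].
  - assert (Hvf : valid_diamond (shift_up hi f)).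
    { apply valid_shift_up; auto. intros y Hy. apply (Hchild f y); auto. }
    split; [apply IH; auto; apply dsize_shift_up_child; auto|].
    intros x Hx. apply root_labels_incl, (Permutation_in _ (btree_of_diamond_perm _ Hvf)) in Hx.
    unfold shift_up in Hx. rewrite dlabels_dmap in Hx. apply in_map_iff in Hx as [y [<- Hy]].
    pose proof (Hchild f y Hf Hy). pose proof (succ_in_gt (dlabels f) hi y). lia.
  - split; [apply IH; auto; apply dsize_child; auto|].
    intros x Hx. apply root_labels_incl in Hx.
    apply (Permutation_in _ (btree_of_diamond_perm _ (Hfs f Hf))) in Hx.
    pose proof (Hchild f x Hf Hx). destruct (Nat.eq_dec s x); [subst; contradiction|lia].
Qed.

Lemma wbtree_btree_of_diamond phi d :
  valid_diamond d -> wbtree phi (btree_of_diamond d) = wdiamond phi d.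
Proof.
  induction d as [d IH] using (induction_ltof1 _ dsize). intros Hv.
  destruct d as [l|lo hi fs]; [reflexivity|].
  destruct (valid_DN_inv _ _ _ Hv) as (_ & Hfs & _ & _).
  rewrite btree_of_diamond_DN. simpl. rewrite length_map. f_equal.
  apply fold_right_mult_map. intros f Hf. destruct in_dec as [Hin|Hnin].
  - rewrite IH; [apply wdiamond_dmap| |].
    + apply dsize_shift_up_child; auto.
    + apply valid_shift_up; auto. intros y Hy. apply (DN_child_label_range lo hi fs f y Hv); auto.
  - apply IH; auto. apply dsize_child; auto.
Qed.

Lemma B2_child_label_range a b ts u y :
  valid_btree (B2 a b ts) -> In u ts -> In y (blabels u) ->
  b < y <= fold_right Nat.max b (flat_map blabels ts).
Proof.
  intros Hv Hu Hy. inversion Hv as [|? ? ? _ Hts]; subst. destruct (Hts u Hu) as [Hvu Hru].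
  split; [apply (valid_btree_labels_gt b u); auto|].
  apply fold_right_max_ge. right. apply in_flat_map; eauto.
Qed.

Lemma diamond_of_btree_perm t : valid_btree t -> NoDup (blabels t) ->
  Permutation (dlabels (diamond_of_btree t)) (blabels t).
Proof.
  induction t as [a|a b ts IH] using btree_nested_ind; intros Hv HNt; [reflexivity|].
  destruct (valid_B2_inv _ _ _ Hv HNt) as (_ & Hts & _ & HN).
  pose proof (fun u y => B2_child_label_range a b ts u y Hv) as Hchild.
  assert (HIH : forall u, In u ts -> Permutation (dlabels (diamond_of_btree u)) (blabels u)).
  { intros u Hu. apply IH; auto; apply Hts; auto. }
  rewrite diamond_of_btree_B2. cbv zeta. simpl dlabels. apply perm_skip.
  pose proof (fold_right_max_mem b (flat_map blabels ts)) as HH.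
  set (H := fold_right Nat.max b (flat_map blabels ts)) in *.
  destruct HH as [Hb|HH].
  - rewrite <- Hb at 1. apply perm_skip, perm_flat_map_map. intros u Hu.
    destruct in_dec as [Hin|Hnin]; [|auto].
    specialize (Hchild u H Hu Hin). lia.
  - apply perm_flat_map_map_marked; auto; intros u Hu Hin;
      destruct in_dec; try contradiction; auto.
    destruct (Hts u Hu) as [_ HNu].
    eapply perm_trans; [apply shift_down_perm|apply perm_skip]; auto.
    + apply (Permutation_NoDup (Permutation_sym (HIH u Hu))); auto.
    + apply (Permutation_in H (Permutation_sym (HIH u Hu))); auto.
    + intros y Hy. apply (Hchild u); auto. apply (Permutation_in y (HIH u Hu)); auto.
Qed.

Lemma diamond_of_btree_valid t :
  valid_btree t -> NoDup (blabels t) -> valid_diamond (diamond_of_btree t).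
Proof.
  induction t as [a|a b ts IH] using btree_nested_ind; intros Hv HNt; [constructor|].
  pose proof (diamond_of_btree_perm _ Hv HNt) as Hperm.
  destruct (valid_B2_inv _ _ _ Hv HNt) as (Hab & Hts & _ & _).
  rewrite diamond_of_btree_B2 in *. cbv zeta in *.
  pose proof (fun u y => B2_child_label_range a b ts u y Hv) as Hchild.
  set (H := fold_right Nat.max b (flat_map blabels ts)) in *.
  constructor.
  - pose proof (fold_right_max_ge b (flat_map blabels ts) b (or_introl eq_refl)) as Hb.
    fold H in Hb. lia.
  - intros c Hc. apply in_map_iff in Hc as [u [<- Hu]].
    destruct (Hts u Hu) as [Hvu HNu].
    pose proof (diamond_of_btree_perm _ Hvu HNu) as Hpu.
    assert (Hlab : forall y, In y (dlabels (diamond_of_btree u)) -> b < y <= H).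
    { intros y Hy. apply (Hchild u); auto. apply (Permutation_in y Hpu); auto. }
    destruct in_dec as [Hin|Hnin].
    + split; [apply valid_shift_down; auto; intros y Hy; apply Hlab; auto|].
      intros x Hx. unfold shift_down in Hx. rewrite dlabels_dmap in Hx.
      apply in_map_iff in Hx as [y [<- Hy]]. specialize (Hlab y Hy).
      pose proof (pred_in_ge (dlabels (diamond_of_btree u)) b y).
      pose proof (pred_in_lt (dlabels (diamond_of_btree u)) b y). lia.
    + split; [apply IH; auto|].
      intros x Hx. specialize (Hlab x Hx). apply (Permutation_in x Hpu) in Hx.
      destruct (Nat.eq_dec x H); [subst; contradiction|lia].
  - apply (Permutation_NoDup (Permutation_sym Hperm)) in HNt.
    simpl in HNt. apply NoDup_cons_iff in HNt as [_ HNt]. apply NoDup_cons_iff in HNt as [_ HNt].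
    auto.
Qed.

Lemma diamond_of_btree_of_diamond d :
  valid_diamond d -> diamond_of_btree (btree_of_diamond d) = d.
Proof.
  induction d as [d IH] using (induction_ltof1 _ dsize). intros Hv.
  destruct d as [l|lo hi fs]; [reflexivity|].
  pose proof (btree_of_diamond_perm _ Hv) as Hperm.
  destruct (valid_DN_inv _ _ _ Hv) as (Hlh & Hfs & Hrange & _).
  pose proof (fun f y => DN_child_label_range lo hi fs f y Hv) as Hchild.
  rewrite btree_of_diamond_DN in *. cbv zeta in *. rewrite diamond_of_btree_B2. cbv zeta.
  set (s := succ_in (flat_map dlabels fs) hi lo) in *.
  simpl in Hperm. apply Permutation_cons_inv in Hperm.
  assert (Hmax : fold_right Nat.max s (flat_map blabels (map (fun f =>
            if in_dec Nat.eq_dec s (dlabels f) then btree_of_diamond (shift_up hi f)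
            else btree_of_diamond f) fs)) = hi).
  { apply fold_right_max_eq; [apply (Permutation_in hi (Permutation_sym Hperm)); left; auto|].
    intros y Hy. apply (Permutation_in y Hperm) in Hy as [<-|Hy]; auto.
    specialize (Hrange y Hy). lia. }
  rewrite Hmax. f_equal. rewrite map_map. erewrite map_ext_in; [apply map_id|]. intros f Hf.
  destruct (in_dec Nat.eq_dec s (dlabels f)) as [Hin|Hnin].
  - assert (Hrf : forall y, In y (dlabels f) -> s <= y < hi) by (intros y; apply Hchild; auto).
    assert (Hvf : valid_diamond (shift_up hi f)) by (apply valid_shift_up; auto; apply Hrf).
    assert (Hup : Permutation (s :: dlabels (shift_up hi f)) (hi :: dlabels f)).
    { apply shift_up_perm; auto using valid_diamond_NoDup. }
    destruct in_dec as [Hhi|Hhi].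
    + rewrite IH; auto.
      * apply shift_down_shift_up; auto using valid_diamond_NoDup.
      * apply dsize_shift_up_child; auto.
    + exfalso. apply Hhi, (Permutation_in hi (Permutation_sym (btree_of_diamond_perm _ Hvf))).
      destruct (Permutation_in hi (Permutation_sym Hup) (or_introl eq_refl)) as [E|]; auto.
      specialize (Hchild f s Hf Hin). lia.
  - destruct in_dec as [Hhi|Hhi].
    + apply (Permutation_in hi (btree_of_diamond_perm _ (Hfs f Hf))) in Hhi.
      specialize (Hchild f hi Hf Hhi). lia.
    + apply IH; auto. apply dsize_child; auto.
Qed.

Lemma btree_of_diamond_of_btree t :
  valid_btree t -> NoDup (blabels t) -> btree_of_diamond (diamond_of_btree t) = t.
Proof.
  induction t as [a|a b ts IH] using btree_nested_ind; intros Hv HNt; [reflexivity|].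
  pose proof (diamond_of_btree_perm _ Hv HNt) as Hperm.
  destruct (valid_B2_inv _ _ _ Hv HNt) as (Hab & Hts & Hgt & _).
  rewrite diamond_of_btree_B2 in *. cbv zeta in *. rewrite btree_of_diamond_DN. cbv zeta.
  pose proof (fun u y => B2_child_label_range a b ts u y Hv) as Hchild.
  set (H := fold_right Nat.max b (flat_map blabels ts)) in *.
  simpl in Hperm. apply Permutation_cons_inv in Hperm.
  assert (Hb : succ_in (flat_map dlabels (map (fun u =>
            if in_dec Nat.eq_dec H (blabels u) then shift_down b (diamond_of_btree u)
            else diamond_of_btree u) ts)) H a = b).
  { pose proof (fold_right_max_ge b (flat_map blabels ts) b (or_introl eq_refl)) as HbH.
    fold H in HbH. apply succ_in_eq; [|lia|].
    - apply (Permutation_in b (Permutation_sym Hperm)). left; auto.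
    - intros y Hy _. destruct (Permutation_in y Hperm (or_intror Hy)) as [<-|HyL]; auto.
      specialize (Hgt y HyL). lia. }
  rewrite Hb. f_equal. rewrite map_map. erewrite map_ext_in; [apply map_id|]. intros u Hu.
  destruct (Hts u Hu) as [Hvu HNu].
  pose proof (diamond_of_btree_perm _ Hvu HNu) as Hpu.
  assert (Hlab : forall y, In y (dlabels (diamond_of_btree u)) -> b < y <= H).
  { intros y Hy. apply (Hchild u); auto. apply (Permutation_in y Hpu); auto. }
  assert (HNd : NoDup (dlabels (diamond_of_btree u))).
  { apply (Permutation_NoDup (Permutation_sym Hpu)); auto. }
  destruct (in_dec Nat.eq_dec H (blabels u)) as [Hin|Hnin].
  - assert (HinH : In H (dlabels (diamond_of_btree u))).
    { apply (Permutation_in H (Permutation_sym Hpu)); auto. }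
    destruct in_dec as [Hbin|Hbin].
    + rewrite shift_up_shift_down; auto.
    + exfalso. apply Hbin.
      destruct (Permutation_in b (Permutation_sym (shift_down_perm _ b H HNd HinH Hlab))
                  (or_introl eq_refl)) as [E|]; auto.
      specialize (Hlab H HinH). lia.
  - destruct in_dec as [Hbin|Hbin]; [|apply IH; auto].
    specialize (Hlab b Hbin). lia.
Qed.

Lemma NoDup_enumeration {A} (P : A -> Prop) (l : list A) :
  (forall a, P a -> In a l) -> exists ld, NoDup ld /\ forall a, In a ld <-> P a.
Proof.
  intros Hl.
  set (Pb := fun a => if excluded_middle_informative (P a) then true else false).
  set (deq := fun x y : A => excluded_middle_informative (x = y)).
  exists (nodup deq (filter Pb l)). split; [apply NoDup_nodup|].
  intros a. rewrite nodup_In, filter_In. unfold Pb.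
  destruct excluded_middle_informative as [HP|HP]; split.
  - intros _; exact HP.
  - intros Ha; split; auto.
  - intros [_ E]; discriminate.
  - intros Ha; contradiction.
Qed.

Lemma NoDup_enumeration_map {A B} (P : A -> Prop) (Q : B -> Prop) (f : A -> B) ld :
  NoDup ld -> (forall a, In a ld <-> P a) ->
  (forall a, P a -> Q (f a)) ->
  (forall a1 a2, P a1 -> P a2 -> f a1 = f a2 -> a1 = a2) ->
  (forall b, Q b -> exists a, P a /\ f a = b) ->
  NoDup (map f ld) /\ forall b, In b (map f ld) <-> Q b.
Proof.
  intros Hnd Hld HPQ Hinj Hsurj. split.
  - apply NoDup_map_NoDup_ForallPairs; auto. intros x y Hx Hy. apply Hinj; apply Hld; auto.
  - intros b. rewrite in_map_iff. split.
    + intros [a [<- Ha]]. apply HPQ, Hld, Ha.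
    + intros Hb. destruct (Hsurj b Hb) as [a [Ha <-]]. exists a. split; auto. apply Hld, Ha.
Qed.

Fixpoint lists_upto {X} (A : list X) (k : nat) : list (list X) :=
  match k with
  | 0 => [[]]
  | S k' => [] :: flat_map (fun a => map (cons a) (lists_upto A k')) A
  end.

Lemma in_lists_upto {X} (A : list X) k l : incl l A -> length l <= k -> In l (lists_upto A k).
Proof.
  revert l; induction k as [|k IH]; intros l Hl Hlen; simpl.
  - destruct l; simpl in *; [auto|lia].
  - destruct l as [|x l]; [left; auto|right].
    apply incl_cons_inv in Hl as [Hx Hl]. apply in_flat_map. exists x. split; auto.
    apply in_map. apply IH; auto. simpl in Hlen. lia.
Qed.

Fixpoint diamonds_upto (labs : list nat) (m : nat) : list diamond :=
  match m with
  | 0 => []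
  | S m' =>
      map DV labs ++
      flat_map (fun lo => flat_map (fun hi =>
                  map (DN lo hi) (lists_upto (diamonds_upto labs m') m')) labs) labs
  end.

Lemma length_le_flat_map_dlabels fs : length fs <= length (flat_map dlabels fs).
Proof.
  induction fs as [|f fs IH]; simpl; auto. rewrite length_app.
  destruct f; simpl; lia.
Qed.

Lemma in_diamonds_upto labs m d :
  dsize d <= m -> incl (dlabels d) labs -> In d (diamonds_upto labs m).
Proof.
  revert d; induction m as [|m IH]; intros d Hs Hl.
  - destruct d; unfold dsize in Hs; simpl in Hs; lia.
  - simpl. apply in_or_app. destruct d as [l|lo hi fs]; simpl in Hl.
    + left. apply in_map, Hl. left; auto.
    + right. apply incl_cons_inv in Hl as [Hlo Hl]. apply incl_cons_inv in Hl as [Hhi Hl].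
      apply in_flat_map. exists lo. split; auto. apply in_flat_map. exists hi. split; auto.
      apply in_map. apply in_lists_upto.
      * intros f Hf. apply IH.
        -- pose proof (dsize_child lo hi fs f Hf). lia.
        -- intros x Hx. apply Hl, in_flat_map. eauto.
      * pose proof (length_le_flat_map_dlabels fs). unfold dsize in Hs. simpl in Hs. lia.
Qed.

Lemma diamond_enumeration n : exists ld, NoDup ld /\ forall d, In d ld <-> is_diamond_n n d.
Proof.
  apply NoDup_enumeration with (diamonds_upto (seq 1 n) n). intros d [_ Hp].
  apply in_diamonds_upto.
  - unfold dsize. rewrite (Permutation_length Hp), length_seq. auto.
  - intros x Hx. apply (Permutation_in x Hp), Hx.
Qed.

Lemma is_btree_n_btree_of_diamond n d : is_diamond_n n d -> is_btree_n n (btree_of_diamond d).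
Proof.
  intros [Hv Hp]. split; [apply btree_of_diamond_valid; auto|].
  eapply perm_trans; [apply btree_of_diamond_perm|]; auto.
Qed.

Lemma is_btree_n_NoDup n t : is_btree_n n t -> NoDup (blabels t).
Proof. intros [_ Hp]. apply (Permutation_NoDup (Permutation_sym Hp)), seq_NoDup. Qed.

Lemma is_diamond_n_diamond_of_btree n t : is_btree_n n t -> is_diamond_n n (diamond_of_btree t).
Proof.
  intros Ht. pose proof (is_btree_n_NoDup n t Ht) as HN. destruct Ht as [Hv Hp].
  split; [apply diamond_of_btree_valid; auto|].
  eapply perm_trans; [apply diamond_of_btree_perm|]; auto.
Qed.

Open Scope R_scope.

Theorem mainTheorem2 (phi : nat -> R)
  (Hphi_nonneg : forall k, 0 <= phi k) (Hphi0 : 0 < phi 0%nat)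
  (n : nat) (Hn : (1 <= n)%nat) :
  (exists f : diamond -> btree,
      (forall d, is_diamond_n n d ->
         is_btree_n n (f d) /\ wbtree phi (f d) = wdiamond phi d) /\
      (forall d1 d2, is_diamond_n n d1 -> is_diamond_n n d2 ->
         f d1 = f d2 -> d1 = d2) /\
      (forall t, is_btree_n n t -> exists d, is_diamond_n n d /\ f d = t))
  /\
  (exists (ld : list diamond) (lt : list btree),
      NoDup ld /\ (forall d, In d ld <-> is_diamond_n n d) /\
      NoDup lt /\ (forall t, In t lt <-> is_btree_n n t) /\
      sumR (map (wdiamond phi) ld) = sumR (map (wbtree phi) lt)).
Proof.
  (* The bijection uses none of the hypotheses on [phi] and [n]. *)
  assert (Hinj : forall d1 d2, is_diamond_n n d1 -> is_diamond_n n d2 ->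
                 btree_of_diamond d1 = btree_of_diamond d2 -> d1 = d2).
  { intros d1 d2 [Hv1 _] [Hv2 _] E.
    rewrite <- (diamond_of_btree_of_diamond d1), <- (diamond_of_btree_of_diamond d2), E; auto. }
  assert (Hsurj : forall t, is_btree_n n t -> exists d, is_diamond_n n d /\ btree_of_diamond d = t).
  { intros t Ht. exists (diamond_of_btree t). split; [apply is_diamond_n_diamond_of_btree; auto|].
    apply btree_of_diamond_of_btree; [apply Ht|apply (is_btree_n_NoDup n), Ht]. }
  split.
  - exists btree_of_diamond. split; auto. intros d Hd.
    split; [apply is_btree_n_btree_of_diamond; auto|apply wbtree_btree_of_diamond, Hd].
  - destruct (diamond_enumeration n) as (ld & Hnd & Hld).
    destruct (NoDup_enumeration_map _ _ btree_of_diamond ld Hnd Hld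
                (is_btree_n_btree_of_diamond n) Hinj Hsurj) as [Hnt Hlt].
    exists ld, (map btree_of_diamond ld). do 4 (split; [auto|]).
    rewrite map_map. f_equal. apply map_ext_in. intros d Hd.
    symmetry. apply wbtree_btree_of_diamond, Hld, Hd.
Qed.
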